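(* Let $\mathcal{C}$ be a bicomplete category with splitting and disjoint coproducts. Then the identity functor of $\mathcal{C}$ is a left Quillen equivalence from the generalized core model structure to the generalized cocore model structure.
   Context: Bicomplete means having all finite limits and finite colimits. In both structures the weak equivalences are the morphisms $f:A\to B$ for which some morphism $B\to A$ exists. Generalized core model structure: cofibrations are the morphisms with the left lifting property against all retractions, fibrations are those with the right lifting property against all cofibrations that are weak equivalences (its acyclic fibrations are the retractions). Generalized cocore model structure: fibrations are the morphisms with the right lifting property against all sections, cofibrations are those with the left lifting property against all fibrations that are weak equivalences (its acyclic cofibrations are the sections). Splitting coproducts: every $f:X\to A\sqcup B$ is isomorphic to $f_L\sqcup f_R$ with $f_L:X_L\to A$, $f_R:X_R\to B$, $X\cong X_L\sqcup X_R$. Disjoint coproducts: coproduct injections are monic, the pullback of $i_1:A\to A\sqcup B$ and $i_2:B\to A\sqcup B$ is the initial object, and the pullback of $i_1$ along itself (resp. $i_2$ along itself) is $A$ (resp. $B$) with identity maps. *)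

Record Category := {
  Ob :> Type;
  Hom : Ob -> Ob -> Type;
  idm : forall A, Hom A A;
  comp : forall {A B C}, Hom B C -> Hom A B -> Hom A C;
  comp_id_l : forall A B (f : Hom A B), comp (idm B) f = f;
  comp_id_r : forall A B (f : Hom A B), comp f (idm A) = f;
  comp_assoc : forall A B C D (h : Hom C D) (g : Hom B C) (f : Hom A B),
      comp h (comp g f) = comp (comp h g) f
}.

Arguments Hom {c} _ _.
Arguments idm {c} _.
Arguments comp {c A B C} _ _.

Section Cat.
Variable C : Category.

Definition IsInitial (I : C) : Prop :=
  forall X : C, exists f : Hom I X, forall g : Hom I X, g = f.
Definition IsTerminal (T : C) : Prop :=
  forall X : C, exists f : Hom X T, forall g : Hom X T, g = f.

Definition IsProduct (A B P : C) (p1 : Hom P A) (p2 : Hom P B) : Prop :=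
  forall (X : C) (f : Hom X A) (g : Hom X B),
    exists h : Hom X P, comp p1 h = f /\ comp p2 h = g /\
      forall h' : Hom X P, comp p1 h' = f -> comp p2 h' = g -> h' = h.

Definition IsCoproduct (A B S : C) (i1 : Hom A S) (i2 : Hom B S) : Prop :=
  forall (X : C) (f : Hom A X) (g : Hom B X),
    exists h : Hom S X, comp h i1 = f /\ comp h i2 = g /\
      forall h' : Hom S X, comp h' i1 = f -> comp h' i2 = g -> h' = h.

Definition IsEqualizer {A B : C} (f g : Hom A B) (E : C) (e : Hom E A) : Prop :=
  comp f e = comp g e /\
  forall (X : C) (x : Hom X A), comp f x = comp g x ->
    exists u : Hom X E, comp e u = x /\
      forall u' : Hom X E, comp e u' = x -> u' = u.

Definition IsCoequalizer {A B : C} (f g : Hom A B) (Q : C) (q : Hom B Q) : Prop :=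
  comp q f = comp q g /\
  forall (X : C) (x : Hom B X), comp x f = comp x g ->
    exists u : Hom Q X, comp u q = x /\
      forall u' : Hom Q X, comp u' q = x -> u' = u.

Definition IsPullback {A B Z : C} (f : Hom A Z) (g : Hom B Z)
    (P : C) (p1 : Hom P A) (p2 : Hom P B) : Prop :=
  comp f p1 = comp g p2 /\
  forall (X : C) (x1 : Hom X A) (x2 : Hom X B), comp f x1 = comp g x2 ->
    exists u : Hom X P, comp p1 u = x1 /\ comp p2 u = x2 /\
      forall u' : Hom X P, comp p1 u' = x1 -> comp p2 u' = x2 -> u' = u.

Definition HasFiniteLimits : Prop :=
  (exists T : C, IsTerminal T) /\
  (forall A B : C, exists (P : C) (p1 : Hom P A) (p2 : Hom P B), IsProduct A B P p1 p2) /\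
  (forall (A B : C) (f g : Hom A B), exists (E : C) (e : Hom E A), IsEqualizer f g E e).

Definition HasFiniteColimits : Prop :=
  (exists I : C, IsInitial I) /\
  (forall A B : C, exists (S : C) (i1 : Hom A S) (i2 : Hom B S), IsCoproduct A B S i1 i2) /\
  (forall (A B : C) (f g : Hom A B), exists (Q : C) (q : Hom B Q), IsCoequalizer f g Q q).

Definition Bicomplete : Prop := HasFiniteLimits /\ HasFiniteColimits.

Definition Monic {A B : C} (f : Hom A B) : Prop :=
  forall (X : C) (g h : Hom X A), comp f g = comp f h -> g = h.

Definition SplittingCoproducts : Prop :=
  forall (A B S : C) (i1 : Hom A S) (i2 : Hom B S), IsCoproduct A B S i1 i2 ->
  forall (X : C) (f : Hom X S),
    exists (XL XR : C) (j1 : Hom XL X) (j2 : Hom XR X) (fL : Hom XL A) (fR : Hom XR B),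
      IsCoproduct XL XR X j1 j2 /\ comp f j1 = comp i1 fL /\ comp f j2 = comp i2 fR.

Definition DisjointCoproducts : Prop :=
  forall (A B S : C) (i1 : Hom A S) (i2 : Hom B S), IsCoproduct A B S i1 i2 ->
    Monic i1 /\ Monic i2 /\
    (forall (P : C) (p1 : Hom P A) (p2 : Hom P B), IsPullback i1 i2 P p1 p2 -> IsInitial P) /\
    IsPullback i1 i1 A (idm A) (idm A) /\
    IsPullback i2 i2 B (idm B) (idm B).

Definition MorClass := forall A B : C, Hom A B -> Prop.

Definition LLP {A B X Y : C} (i : Hom A B) (p : Hom X Y) : Prop :=
  forall (u : Hom A X) (v : Hom B Y), comp p u = comp v i ->
    exists h : Hom B X, comp h i = u /\ comp p h = v.

Definition Weq : MorClass := fun A B _ => exists g : Hom B A, True.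
Definition Retraction : MorClass :=
  fun A B p => exists s : Hom B A, comp p s = idm B.
Definition Section_ : MorClass :=
  fun A B i => exists r : Hom B A, comp r i = idm A.

Definition CoreCof : MorClass :=
  fun A B i => forall X Y (p : Hom X Y), Retraction X Y p -> LLP i p.
Definition CoreFib : MorClass :=
  fun X Y p => forall A B (i : Hom A B), CoreCof A B i -> Weq A B i -> LLP i p.

Definition CocoreFib : MorClass :=
  fun X Y p => forall A B (i : Hom A B), Section_ A B i -> LLP i p.
Definition CocoreCof : MorClass :=
  fun A B i => forall X Y (p : Hom X Y), CocoreFib X Y p -> Weq X Y p -> LLP i p.

Record ModelData := { cof : MorClass; fib : MorClass; we : MorClass }.

Definition CoreStructure : ModelData := {| cof := CoreCof; fib := CoreFib; we := Weq |}.
Definition CocoreStructure : ModelData := {| cof := CocoreCof; fib := CocoreFib; we := Weq |}.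

Definition Cofibrant (M : ModelData) (A : C) : Prop :=
  forall (I : C) (u : Hom I A), IsInitial I -> cof M I A u.
Definition Fibrant (M : ModelData) (X : C) : Prop :=
  forall (T : C) (t : Hom X T), IsTerminal T -> fib M X T t.

(* The identity functor (left adjoint to the identity, unit/counit identities)
   is a left Quillen equivalence M -> N (Hovey, Def. 1.3.1 and 1.3.12):
   it preserves cofibrations and trivial cofibrations, and for cofibrant A in M
   and fibrant X in N, f : A -> X is a weak equivalence in N iff its adjunct
   (which is f itself) is a weak equivalence in M. *)
Definition IdLeftQuillenEquivalence (M N : ModelData) : Prop :=
  (forall A B (f : Hom A B), cof M A B f -> cof N A B f) /\
  (forall A B (f : Hom A B), cof M A B f -> we M A B f -> cof N A B f /\ we N A B f) /\
  (forall (A X : C), Cofibrant M A -> Fibrant N X ->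
     forall f : Hom A X, we N A X f <-> we M A X f).

End Cat.


(* Both structures share the weak equivalences: f : A -> B is one as soon as
   some morphism B -> A exists.  Hence the Quillen-equivalence condition on
   weak equivalences holds trivially, trivial cofibrations are preserved as
   soon as cofibrations are, and everything reduces to showing that every
   core cofibration is a cocore cofibration.

   Core cofibrations lift against all retractions, while cocore cofibrations
   are characterised by lifting against fibrations that are weak equivalences
   in the cocore structure.  So it suffices to show that an acyclic cocore
   fibration p : X -> Y (with some g : Y -> X) is a retraction.  For this,
   the injection X -> Y ⊔ X is a section (split by [g, id]). *)

Section IdentityQuillen.
Variable C : Category.

Definition HasBinaryCoproducts : Prop :=
  forall A B : C, exists (S : C) (i1 : Hom A S) (i2 : Hom B S), IsCoproduct C A B S i1 i2.

Lemma cocore_acyclic_fibration_retraction :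
  HasBinaryCoproducts ->
  forall (X Y : C) (p : Hom X Y),
    CocoreFib C X Y p -> Weq C X Y p -> Retraction C X Y p.
Proof.
  intros Hcoprod X Y p Hfib [g _].
  destruct (Hcoprod Y X) as [S [i1 [i2 Hco]]].
  (* r = [g, id] splits the injection i2 : X -> Y ⊔ X *)
  destruct (Hco X g (idm X)) as [r [_ [Hr2 _]]].
  (* v = [id, p] : Y ⊔ X -> Y closes the lifting square *)
  destruct (Hco Y (idm Y) p) as [v [Hv1 [Hv2 _]]].
  assert (Hsection : Section_ C X S i2) by (exists r; exact Hr2).
  assert (Hsquare : comp p (idm X) = comp v i2)
    by (rewrite comp_id_r; symmetry; exact Hv2).
  destruct (Hfib X S i2 Hsection (idm X) v Hsquare) as [h [_ Hph]].
  exists (comp h i1).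
  rewrite comp_assoc, Hph; exact Hv1.
Qed.

Lemma core_cofibration_cocore_cofibration :
  HasBinaryCoproducts ->
  forall (A B : C) (i : Hom A B), CoreCof C A B i -> CocoreCof C A B i.
Proof.
  intros Hcoprod A B i Hcof X Y p Hfib Hwe.
  apply Hcof.
  exact (cocore_acyclic_fibration_retraction Hcoprod X Y p Hfib Hwe).
Qed.

End IdentityQuillen.

Theorem proposition5 (C : Category) :
  Bicomplete C -> SplittingCoproducts C -> DisjointCoproducts C ->
  IdLeftQuillenEquivalence C (CoreStructure C) (CocoreStructure C).
Proof.
  intros [_ [_ [Hcoprod _]]] _ _.
  pose proof (core_cofibration_cocore_cofibration C Hcoprod) as Hcof.
  split; [| split].
  - exact Hcof.
  - intros A B f Hf Hwe; split; [exact (Hcof A B f Hf) | exact Hwe].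
  - (* both structures have the same weak equivalences *)
    intros A X _ _ f; simpl; tauto.
Qed.
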